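(* Let $U,V,W$ be Hermitian spaces with $U$ finite-dimensional, $D\in\mathrm{Hom}(U,V)$ linear, and $\rho:V\times U^*\to W$ bilinear. Then $$\|\mathrm{Tr}_\rho D\|_W\le\sqrt{\mathrm{rank}(D)}\,\|\rho\|\,\|D\|.$$
   Context: $\mathrm{Tr}_\rho D=\sum_i\rho(Du_i,u^i)\in W$ for a basis $\{u_i\}$ of $U$ with dual basis $\{u^i\}$ of $U^*$ (independent of the basis). $U^*$ carries the dual Hermitian structure. $\|\rho\|=\sup\{\|\rho(v,\alpha)\|_W:\|v\|_V=1,\|\alpha\|_{U^*}=1\}$, and $\|D\|=\big(\sum_i\|Du_i\|_V^2\big)^{1/2}$ for an orthonormal basis $\{u_i\}$ of $U$ (Hilbert–Schmidt norm). *)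

From HB Require Import structures.
From mathcomp Require Import all_boot all_order all_algebra.
From mathcomp Require Import all_classical all_reals.
From mathcomp Require Import ereal.
From mathcomp Require Import complex.

Set Implicit Arguments.
Unset Strict Implicit.
Unset Printing Implicit Defensive.

Import Order.TTheory GRing.Theory Num.Theory.
Local Open Scope ring_scope.

Record herm_space (R : realType) (V : lmodType R[i]) := HermSpace {
  hdot : V -> V -> R[i];
  hdot_linl : forall (a : R[i]) (u v w : V),
    hdot (a *: u + v) w = a * hdot u w + hdot v w;
  hdot_sym : forall u v : V, hdot v u = conjc (hdot u v);
  hdot_pos : forall v : V, v != 0 -> 0 < hdot v v
}.

Definition hnorm (R : realType) (V : lmodType R[i]) (H : herm_space V) (v : V) : R :=
  Num.sqrt (complex.Re (hdot H v v)).

Definition orthonormal_tuple (R : realType) (V : lmodType R[i]) (H : herm_space V)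
  (n : nat) (e : n.-tuple V) : Prop :=
  forall i j : 'I_n, hdot H (tnth e i) (tnth e j) = (i == j)%:R.


(* The dual basis element u^i = < . , e_i > of an orthonormal_tuple basis e. *)
Definition dualvec (R : realType) (U : vectType R[i]) (H : herm_space U)
  (n : nat) (e : n.-tuple U) (i : 'I_n) : 'Hom(U, R[i]^o) :=
  linfun (fun u : U => (hdot H u (tnth e i) : R[i]^o)).

(* The dual Hermitian structure on U^*, computed in an orthonormal_tuple basis e of U:
   <a, b>_{U^*} = sum_i a(e_i) conj(b(e_i)); its norm. *)
Definition dualdot (R : realType) (U : vectType R[i])
  (n : nat) (e : n.-tuple U) (a b : 'Hom(U, R[i]^o)) : R[i] :=
  \sum_(i < n) (a (tnth e i) : R[i]) * conjc (b (tnth e i) : R[i]).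

Definition dualnorm (R : realType) (U : vectType R[i])
  (n : nat) (e : n.-tuple U) (a : 'Hom(U, R[i]^o)) : R :=
  Num.sqrt (complex.Re (dualdot e a a)).

Definition trace_rho (R : realType) (U : vectType R[i]) (V W : lmodType R[i])
  (HU : herm_space U) (n : nat) (e : n.-tuple U)
  (rho : V -> 'Hom(U, R[i]^o) -> W) (D : U -> V) : W :=
  \sum_(i < n) rho (D (tnth e i)) (dualvec HU e i).

(* ||rho|| = sup { ||rho(v,a)||_W : ||v||_V = 1, ||a||_{U^*} = 1 } in \bar R
   (it may be +oo when V is infinite dimensional). *)
Definition rho_norm (R : realType) (U : vectType R[i]) (V W : lmodType R[i])
  (HV : herm_space V) (HW : herm_space W) (n : nat) (e : n.-tuple U)
  (rho : V -> 'Hom(U, R[i]^o) -> W) : \bar R :=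
  ereal_sup (fun x : \bar R => exists v : V, exists a : 'Hom(U, R[i]^o),
    [/\ hnorm HV v = 1, dualnorm e a = 1 & x = (hnorm HW (rho v a))%:E]).

Definition hs_norm (R : realType) (U : vectType R[i]) (V : lmodType R[i])
  (HV : herm_space V) (n : nat) (e : n.-tuple U) (D : U -> V) : R :=
  Num.sqrt (\sum_(i < n) hnorm HV (D (tnth e i)) ^+ 2).

(* Linear independence of a finite family in a (possibly infinite-dimensional) module. *)
Definition lin_indep (R : realType) (V : lmodType R[i]) (s : seq V) : Prop :=
  forall c : 'I_(size s) -> R[i],
    \sum_(i < size s) c i *: nth 0 s i = 0 -> forall i, c i = 0.

(* rank D = dim (im D) = maximal number of linearly independent vectors of the
   form D u (bounded by dim U). *)
Definition rank_lin (R : realType) (U : vectType R[i]) (V : lmodType R[i])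
  (D : U -> V) : nat :=
  (\max_(k < (\dim (fullv : {vspace U})).+1 |
      `[< exists s : k.-tuple U, lin_indep (map D s) >]) k)%N.

From HB Require Import structures.
From mathcomp Require Import all_boot all_order all_algebra.
From mathcomp Require Import all_classical all_reals.
From mathcomp Require Import ereal complex.
From mathcomp Require Import ring lra.
Import Order.TTheory GRing.Theory Num.Theory.
Local Open Scope ring_scope.
Local Open Scope complex_scope.
Set Implicit Arguments.
Unset Strict Implicit.
Unset Printing Implicit Defensive.

(* Induction on a bound r for the rank of D.  Otherwise let f be the unit vector along some D e_k
   and split D = (. | f) f + D', with D' u orthogonal to f.  Prepending e_k to
   a family whose D'-image is independent gives a family whose D-image is
   independent, so rank D' <= r - 1.  By bilinearity
   Tr_rho D = rho(f, a) + Tr_rho D' with a = sum_i (D e_i | f) u^i, and by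
   Pythagoras ||D||^2 = ||a||^2 + ||D'||^2; hence, by induction,
   ||Tr_rho D|| <= ||rho|| (||a|| + sqrt (r - 1) ||D'||)
               <= ||rho|| sqrt r ||D||
   by Cauchy-Schwarz in R^2. *)

Section Scalars.
Variable R : realType.

Lemma sqrt_rank_step (M a b h : R) (r : nat) :
  0 <= M -> 0 <= a -> 0 <= b -> 0 <= h -> h ^+ 2 = a ^+ 2 + b ^+ 2 ->
  M * a + Num.sqrt r%:R * M * b <= Num.sqrt r.+1%:R * M * h.
Proof.
move=> M0 a0 b0 h0 hh.
set s := Num.sqrt r%:R; set s' := Num.sqrt r.+1%:R.
have s0 : 0 <= s := sqrtr_ge0 _.
have ss : s ^+ 2 = r%:R by rewrite sqr_sqrtr ?ler0n.
have ss' : s' ^+ 2 = r%:R + 1 by rewrite sqr_sqrtr ?ler0n // -addn1 natrD.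
have key : a + s * b <= s' * h.
  rewrite -(ler_pXn2r (_ : 0 < 2)%N) ?nnegrE ?addr_ge0 ?mulr_ge0 ?sqrtr_ge0 //.
  rewrite exprMn ss' hh -ss -subr_ge0.
  have -> : (s ^+ 2 + 1) * (a ^+ 2 + b ^+ 2) - (a + s * b) ^+ 2 = (s * a - b) ^+ 2
    by ring.
  exact: sqr_ge0.
have := ler_wpM2l M0 key.
by congr (_ <= _); ring.
Qed.

Lemma ReD (z1 z2 : R[i]) : complex.Re (z1 + z2) = complex.Re z1 + complex.Re z2.
Proof. exact: (raddfD (@complex.Re R : Rcomplex R -> R)). Qed.

Lemma Re_sum n (F : 'I_n -> R[i]) :
  complex.Re (\sum_(i < n) F i) = \sum_(i < n) complex.Re (F i).
Proof. exact: (raddf_sum (@complex.Re R : Rcomplex R -> R)). Qed.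

Lemma Re_realM (t : R) (z : R[i]) : complex.Re (t%:C * z) = t * complex.Re z.
Proof. by case: z => a b /=; simpc. Qed.

Lemma Re_conjc (z : R[i]) : complex.Re (conjc z) = complex.Re z.
Proof. by case: z. Qed.

Lemma Re_mulcJ (z : R[i]) :
  complex.Re (z * conjc z) = complex.Re z ^+ 2 + complex.Im z ^+ 2.
Proof. by case: z => a b /=; simpc; rewrite /=; ring. Qed.

Lemma Re_mulcJ_realM (t : R) (z : R[i]) :
  complex.Re (t%:C * z * conjc (t%:C * z)) = t ^+ 2 * complex.Re (z * conjc z).
Proof. by case: z => a b /=; simpc; rewrite /=; ring. Qed.

Lemma Re_mulcJ_ge0 (z : R[i]) : 0 <= complex.Re (z * conjc z).
Proof. by rewrite Re_mulcJ addr_ge0 ?sqr_ge0. Qed.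

Lemma Re_mulcJ_eq0 (z : R[i]) : complex.Re (z * conjc z) = 0 -> z = 0.
Proof.
rewrite Re_mulcJ; case: z => a b /= h.
have -> : a = 0 by nra.
by have -> : b = 0 by nra.
Qed.

End Scalars.

Section Hermitian.
Variables (R : realType) (V : lmodType R[i]) (H : herm_space V).
Implicit Types (u v w x y : V) (c : R[i]) (t : R).

Lemma hdot0l w : hdot H 0 w = 0.
Proof.
have := hdot_linl H 1 0 0 w; rewrite scale1r addr0 mul1r.
by move/(congr1 (fun z => z - hdot H 0 w)); rewrite addrK subrr.
Qed.

Lemma hdotDl u v w : hdot H (u + v) w = hdot H u w + hdot H v w.
Proof. by have := hdot_linl H 1 u v w; rewrite scale1r mul1r. Qed.

Lemma hdotZl c u w : hdot H (c *: u) w = c * hdot H u w.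
Proof. by have := hdot_linl H c u 0 w; rewrite !addr0 hdot0l addr0. Qed.

Lemma hdotBl u v w : hdot H (u - v) w = hdot H u w - hdot H v w.
Proof. by rewrite -scaleN1r hdotDl hdotZl mulN1r. Qed.

Lemma hdot_suml n (c : 'I_n -> R[i]) (x : 'I_n -> V) w :
  hdot H (\sum_(i < n) c i *: x i) w = \sum_(i < n) c i * hdot H (x i) w.
Proof.
apply: (big_rec2 (fun a b => hdot H a w = b)); first exact: hdot0l.
by move=> i a b _ <-; rewrite hdotDl hdotZl.
Qed.

Lemma hdot0r w : hdot H w 0 = 0.
Proof. by rewrite hdot_sym hdot0l conjc0. Qed.

Lemma hdotDr u v w : hdot H w (u + v) = hdot H w u + hdot H w v.
Proof. by rewrite hdot_sym hdotDl rmorphD /= -!hdot_sym. Qed.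

Lemma hdotZr c u w : hdot H w (c *: u) = conjc c * hdot H w u.
Proof. by rewrite hdot_sym hdotZl rmorphM /= -hdot_sym. Qed.

Lemma hdot_self_real v : hdot H v v = (complex.Re (hdot H v v))%:C.
Proof.
have := hdot_sym H v v; case: (hdot H v v) => a b [] /eqP.
by rewrite -subr_eq0 opprK -mulr2n mulrn_eq0 /= => /eqP ->.
Qed.

Lemma hdot_self_gt0 v : v != 0 -> 0 < complex.Re (hdot H v v).
Proof. by move/(hdot_pos H); rewrite ltcE => /andP[]. Qed.

Lemma hdot_self_ge0 v : 0 <= complex.Re (hdot H v v).
Proof.
have [->|/hdot_self_gt0/ltW //] := eqVneq v 0.
by rewrite hdot0l.
Qed.

Lemma hnorm_ge0 v : 0 <= hnorm H v.
Proof. exact: sqrtr_ge0. Qed.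

Lemma hnorm_gt0 v : v != 0 -> 0 < hnorm H v.
Proof. by move=> v0; rewrite sqrtr_gt0 hdot_self_gt0. Qed.

Lemma hnorm0 : hnorm H 0 = 0.
Proof. by rewrite /hnorm hdot0l sqrtr0. Qed.

Lemma sqr_hnorm v : hnorm H v ^+ 2 = complex.Re (hdot H v v).
Proof. by rewrite sqr_sqrtr // hdot_self_ge0. Qed.

Lemma hnorm_eq1_hdot v : hnorm H v = 1 -> hdot H v v = 1.
Proof. by move=> v1; rewrite hdot_self_real -sqr_hnorm v1 expr1n. Qed.

Lemma Re_hdot_addZ x y t :
  complex.Re (hdot H (x + t%:C *: y) (x + t%:C *: y)) =
  complex.Re (hdot H x x) + 2 * t * complex.Re (hdot H x y)
    + t ^+ 2 * complex.Re (hdot H y y).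
Proof.
rewrite hdotDl !hdotDr !hdotZl !hdotZr conjc_real !ReD !Re_realM.
by rewrite (hdot_sym H x y) Re_conjc; ring.
Qed.

(* The discriminant of the nonnegative quadratic t |-> ||x + t y||^2. *)
Lemma Re_hdot_CauchySchwarz x y :
  complex.Re (hdot H x y) ^+ 2
    <= complex.Re (hdot H x x) * complex.Re (hdot H y y).
Proof.
have [->|y0] := eqVneq y 0; first by rewrite !hdot0r /= expr0n mulr0.
set a := complex.Re (hdot H x x); set p := complex.Re (hdot H x y).
set b := complex.Re (hdot H y y).
have b0 : 0 < b := hdot_self_gt0 y0.
have := mulr_ge0 (ltW b0) (hdot_self_ge0 (x + (- p / b)%:C *: y)).
rewrite Re_hdot_addZ -/a -/b -/p.
have -> : b * (a + 2 * (- p / b) * p + (- p / b) ^+ 2 * b) = a * b - p ^+ 2.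
  by field; rewrite gt_eqF.
lra.
Qed.

Lemma ler_hnormD x y : hnorm H (x + y) <= hnorm H x + hnorm H y.
Proof.
rewrite -(ler_pXn2r (_ : 0 < 2)%N) ?nnegrE ?addr_ge0 ?hnorm_ge0 //.
have := Re_hdot_addZ x y 1; rewrite scale1r -!sqr_hnorm => ->.
have := Re_hdot_CauchySchwarz x y; rewrite -!sqr_hnorm.
have := hnorm_ge0 x; have := hnorm_ge0 y.
set p := complex.Re _; set a := hnorm H x; set b := hnorm H y => b0 a0 hcs.
have : p <= a * b.
  rewrite leNgt; apply/negP => hlt.
  have : 0 < (p + a * b) * (p - a * b) by rewrite mulr_gt0 ?subr_gt0 //; nra.
  nra.
nra.
Qed.

Lemma hnormZ_real t v : 0 <= t -> hnorm H (t%:C *: v) = t * hnorm H v.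
Proof.
move=> t0; rewrite /hnorm hdotZl hdotZr conjc_real !Re_realM mulrA.
by rewrite sqrtrM ?mulr_ge0 // -expr2 sqrtr_sqr ger0_norm.
Qed.

Lemma hnorm_normalize v : v != 0 -> hnorm H ((hnorm H v)^-1%:C *: v) = 1.
Proof.
move=> v0; have nv0 := hnorm_gt0 v0.
by rewrite hnormZ_real ?invr_ge0 ?ltW // mulVf ?gt_eqF.
Qed.

Definition hperp (f v : V) : V := v - hdot H v f *: f.

Section UnitVector.
Variables (f : V) (f1 : hdot H f f = 1).

Lemma hdot_hperp v : hdot H (hperp f v) f = 0.
Proof. by rewrite hdotBl hdotZl f1 mulr1 subrr. Qed.

Lemma sqr_hnorm_addZ_perp c y :
  hdot H y f = 0 ->
  hnorm H (c *: f + y) ^+ 2 = complex.Re (c * conjc c) + hnorm H y ^+ 2.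
Proof.
move=> yf; rewrite !sqr_hnorm hdotDl !hdotDr !hdotZl !hdotZr f1 yf.
by rewrite (hdot_sym H y f) yf conjc0 !mulr0 mulr1 addr0 add0r ReD mulrC.
Qed.

End UnitVector.

Lemma lin_indep1 v : v != 0 -> lin_indep [:: v].
Proof.
move=> v0 c /=; rewrite big_ord1 => /eqP; rewrite scaler_eq0 (negPf v0) orbF.
by move=> /eqP c0 i; rewrite (ord1 i).
Qed.

End Hermitian.

Section Dual.
Variables (R : realType) (U : vectType R[i]) (HU : herm_space U).
Variables (n : nat) (e : n.-tuple U).
Implicit Types (a : 'Hom(U, R[i]^o)) (c : 'I_n -> R[i]).

Lemma dualvecE i x : (dualvec HU e i x : R[i]) = hdot HU x (tnth e i).
Proof.
pose f (u : U) : R[i]^o := hdot HU u (tnth e i).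
have f_lin : linear f by move=> a u v; rewrite /f hdot_linl.
pose fL : {linear U -> R[i]^o} := HB.pack f (GRing.isLinear.Build _ _ _ _ f f_lin).
exact: (lfunE fL x).
Qed.

Lemma dualnorm_ge0 a : 0 <= dualnorm e a.
Proof. exact: sqrtr_ge0. Qed.

Lemma dualnormZ_real (t : R) a : 0 <= t -> dualnorm e (t%:C *: a) = t * dualnorm e a.
Proof.
move=> t0; rewrite /dualnorm /dualdot !Re_sum.
under eq_bigr => i _ do rewrite scale_lfunE Re_mulcJ_realM.
by rewrite -mulr_sumr sqrtrM ?sqr_ge0 // sqrtr_sqr ger0_norm.
Qed.

Hypothesis he : orthonormal_tuple HU e.

Lemma dualsum_tnth c j :
  ((\sum_(i < n) c i *: dualvec HU e i) (tnth e j) : R[i]) = c j.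
Proof.
rewrite sum_lfunE (bigD1 j) //= big1 ?addr0.
  by rewrite scale_lfunE dualvecE he eqxx; exact: mulr1.
move=> i /negPf ij; rewrite scale_lfunE dualvecE he eq_sym ij.
exact: scaler0.
Qed.

Lemma dualnorm_dualsum c :
  dualnorm e (\sum_(i < n) c i *: dualvec HU e i)
    = Num.sqrt (\sum_(i < n) complex.Re (c i * conjc (c i))).
Proof.
rewrite /dualnorm /dualdot Re_sum.
by under eq_bigr => j _ do rewrite dualsum_tnth.
Qed.

Lemma dualnorm_dualsum_eq0 c :
  dualnorm e (\sum_(i < n) c i *: dualvec HU e i) = 0 -> forall i, c i = 0.
Proof.
rewrite dualnorm_dualsum => /eqP; rewrite sqrtr_eq0 => sum_le0 i.
have sum0 : \sum_(i < n) complex.Re (c i * conjc (c i)) = 0.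
  by apply/eqP; rewrite eq_le sum_le0 sumr_ge0 // => j _; exact: Re_mulcJ_ge0.
by apply: Re_mulcJ_eq0; apply: (psumr_eq0P _ sum0) => // j _; exact: Re_mulcJ_ge0.
Qed.

Lemma dualnorm_dualvec k : dualnorm e (dualvec HU e k) = 1.
Proof.
rewrite /dualnorm /dualdot (bigD1 k) //= big1 => [|j /negPf jk].
  by rewrite !dualvecE he eqxx mul1r conjc1 addr0 sqrtr1.
by rewrite !dualvecE he jk mul0r.
Qed.

End Dual.

Section Bilinear.
Variables (R : realType) (U : vectType R[i]) (V W : lmodType R[i]).
Variable rho : V -> 'Hom(U, R[i]^o) -> W.
Hypothesis rho_linl : forall (a : 'Hom(U, R[i]^o)) (c : R[i]) (v v' : V),
  rho (c *: v + v') a = c *: rho v a + rho v' a.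
Hypothesis rho_linr : forall (v : V) (c : R[i]) (a a' : 'Hom(U, R[i]^o)),
  rho v (c *: a + a') = c *: rho v a + rho v a'.

Lemma rho0l a : rho 0 a = 0.
Proof.
have := rho_linl a 1 0 0; rewrite !scale1r addr0.
by move/(congr1 (fun z => z - rho 0 a)); rewrite addrK subrr.
Qed.

Lemma rhoZl a c v : rho (c *: v) a = c *: rho v a.
Proof. by rewrite -[c *: v]addr0 rho_linl rho0l addr0. Qed.

Lemma rho0r v : rho v 0 = 0.
Proof.
have := rho_linr v 1 0 0; rewrite !scale1r addr0.
by move/(congr1 (fun z => z - rho v 0)); rewrite addrK subrr.
Qed.

Lemma rhoZr v c a : rho v (c *: a) = c *: rho v a.
Proof. by rewrite -[c *: a]addr0 rho_linr rho0r addr0. Qed.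

Lemma rho_sumr v n (c : 'I_n -> R[i]) (a : 'I_n -> 'Hom(U, R[i]^o)) :
  rho v (\sum_(i < n) c i *: a i) = \sum_(i < n) c i *: rho v (a i).
Proof.
apply: (big_rec2 (fun x y => rho v x = y)); first exact: rho0r.
by move=> i x y _ <-; rewrite rho_linr.
Qed.

Variables (HU : herm_space U) (HV : herm_space V) (HW : herm_space W).
Variables (n : nat) (e : n.-tuple U).

Lemma trace_rho_addZ (g : U -> R[i]) (f : V) (D : U -> V) :
  trace_rho HU e rho (fun u => g u *: f + D u)
    = rho f (\sum_(i < n) g (tnth e i) *: dualvec HU e i) + trace_rho HU e rho D.
Proof.
by rewrite /trace_rho rho_sumr -big_split; apply: eq_bigr => i _; rewrite rho_linl.
Qed.

Lemma trace_rho_eq0 (D : U -> V) :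
  (forall i, D (tnth e i) = 0) -> trace_rho HU e rho D = 0.
Proof. by move=> De0; rewrite /trace_rho big1 // => i _; rewrite De0 rho0l. Qed.

Hypothesis he : orthonormal_tuple HU e.

Lemma rho_norm_ge0 (v : V) (k : 'I_n) : v != 0 -> (0 <= rho_norm HV HW e rho)%E.
Proof.
move=> v0; apply: le_trans (ereal_sup_ubound _); last first.
  exists ((hnorm HV v)^-1%:C *: v), (dualvec HU e k).
  by split; [exact: hnorm_normalize | exact: dualnorm_dualvec he k |].
by rewrite lee_fin hnorm_ge0.
Qed.

Lemma rho_norm_bound (M : R) : rho_norm HV HW e rho = M%:E ->
  forall v a, 0 < dualnorm e a ->
  hnorm HW (rho v a) <= M * hnorm HV v * dualnorm e a.
Proof.
move=> rhoM v a a0.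
have [->|v0] := eqVneq v 0; first by rewrite rho0l !hnorm0 mulr0 mul0r.
have v0' := hnorm_gt0 HV v0.
set nv := hnorm HV v; set na := dualnorm e a.
have unit_bound : hnorm HW (rho (nv^-1%:C *: v) (na^-1%:C *: a)) <= M.
  rewrite -lee_fin -rhoM; apply: ereal_sup_ubound.
  exists (nv^-1%:C *: v), (na^-1%:C *: a); split => //; first exact: hnorm_normalize.
  by rewrite dualnormZ_real ?invr_ge0 ?ltW // mulVf ?gt_eqF.
have nv0 : 0 <= nv^-1 by rewrite invr_ge0 hnorm_ge0.
have na0 : 0 <= na^-1 by rewrite invr_ge0 dualnorm_ge0.
rewrite rhoZl rhoZr !hnormZ_real // in unit_bound.
have := ler_wpM2l (mulr_ge0 (ltW v0') (ltW a0)) unit_bound.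
have -> : nv * na * (nv^-1 * (na^-1 * hnorm HW (rho v a))) = hnorm HW (rho v a).
  by field; rewrite !gt_eqF.
by rewrite [M * _ * _](_ : _ = nv * na * M) //; ring.
Qed.

End Bilinear.

Section Rank.
Variables (R : realType) (U : vectType R[i]) (V : lmodType R[i]).

Definition image_rank_le (D : U -> V) (r : nat) : Prop :=
  forall s : seq U, lin_indep (map D s) -> (size s <= r)%N.

Lemma image_rank_le0 (D : U -> V) : image_rank_le D 0 -> forall u, D u = 0.
Proof.
move=> D0 u; apply/eqP; apply/negPn/negP => /lin_indep1 Du.
by have := D0 [:: u] Du.
Qed.

Lemma rank_lin_image_le (D : {linear U -> V}) : image_rank_le D (rank_lin D).
Proof.
move=> s Ds.
have s_free : free (in_tuple s).
  apply/freeP => k sk i; move: Ds; rewrite /lin_indep size_map; apply.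
  rewrite -[RHS](linear0 D) -sk linear_sum; apply: eq_bigr => j _.
  by rewrite linearZ (nth_map 0).
have s_le : (size s < (\dim (fullv : {vspace U})).+1)%N.
  by move/eqnP: s_free => /= <-; rewrite ltnS dimvS ?subvf.
apply: (leq_bigmax_cond (Ordinal s_le)).
by apply: asboolT; exists (in_tuple s).
Qed.

Lemma rank_lin_gt0 (D : {linear U -> V}) u : D u != 0 -> (0 < rank_lin D)%N.
Proof. by move/lin_indep1 => Du; exact: rank_lin_image_le [:: u] Du. Qed.

Variables (HV : herm_space V) (f : V) (f1 : hdot HV f f = 1).

(* Comparing the f-components of a vanishing combination isolates the
   coefficient of D u0, since every other term is an f-multiple plus a vector
   orthogonal to f. *)
Lemma lin_indep_cons_perp (D : U -> V) (u0 : U) (c0 : R[i]) (s : seq U) :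
  D u0 = c0 *: f -> c0 != 0 ->
  lin_indep (map (hperp HV f \o D) s) -> lin_indep (map D (u0 :: s)).
Proof.
move=> Du0 c00; rewrite /lin_indep !size_map /= => perp_indep c.
rewrite big_ord_recl /=.
set S := \sum_(i < size s) c (lift ord0 i) *: hperp HV f (D (nth 0 s i)).
set mu := \sum_(i < size s) c (lift ord0 i) * hdot HV (D (nth 0 s i)) f.
have -> : \sum_(i < size s) c (lift ord0 i) *: (map D s)`_(0 + i) = S + mu *: f.
  rewrite /S /mu scaler_suml -big_split; apply: eq_bigr => i _.
  by rewrite /= add0n (nth_map 0) // /hperp -scalerA -scalerDr subrK.
rewrite Du0 scalerA addrCA -scalerDl => comb0.
have Sf : hdot HV S f = 0.
  by rewrite /S hdot_suml big1 // => i _; rewrite hdot_hperp // mulr0.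
have coef0 : c ord0 * c0 + mu = 0.
  have := congr1 (fun z => hdot HV z f) comb0.
  by rewrite /= hdotDl Sf hdotZl f1 hdot0l add0r mulr1.
rewrite coef0 scale0r addr0 in comb0.
have tail0 : forall i, c (lift ord0 i) = 0.
  apply: perp_indep; rewrite -[RHS]comb0 /S; apply: eq_bigr => i _.
  by rewrite (nth_map 0).
have head0 : c ord0 = 0.
  move: coef0; rewrite /mu big1 => [|i _]; last by rewrite tail0 mul0r.
  by rewrite addr0 => /eqP; rewrite mulf_eq0 (negPf c00) orbF => /eqP.
by move=> i; case: (unliftP ord0 i) => [j ->|->].
Qed.

Lemma image_rank_le_perp (D : U -> V) (u0 : U) (c0 : R[i]) (r : nat) :
  D u0 = c0 *: f -> c0 != 0 ->
  image_rank_le D r.+1 -> image_rank_le (hperp HV f \o D) r.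
Proof.
by move=> Du0 c00 Dr s /(lin_indep_cons_perp Du0 c00)/Dr.
Qed.

End Rank.

Section TraceBound.
Variables (R : realType) (U : vectType R[i]) (V W : lmodType R[i]).
Variables (HU : herm_space U) (HV : herm_space V) (HW : herm_space W).
Variables (n : nat) (e : n.-tuple U).
Hypothesis he : orthonormal_tuple HU e.
Variable rho : V -> 'Hom(U, R[i]^o) -> W.
Hypothesis rho_linl : forall (a : 'Hom(U, R[i]^o)) (c : R[i]) (v v' : V),
  rho (c *: v + v') a = c *: rho v a + rho v' a.
Hypothesis rho_linr : forall (v : V) (c : R[i]) (a a' : 'Hom(U, R[i]^o)),
  rho v (c *: a + a') = c *: rho v a + rho v a'.
Variables (M : R) (M0 : 0 <= M).
Hypothesis rhoM : forall v a, 0 < dualnorm e a ->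
  hnorm HW (rho v a) <= M * hnorm HV v * dualnorm e a.

Lemma sqr_hs_norm (D : U -> V) :
  hs_norm HV e D ^+ 2 = \sum_(i < n) hnorm HV (D (tnth e i)) ^+ 2.
Proof. by rewrite sqr_sqrtr // sumr_ge0 // => i _; rewrite sqr_ge0. Qed.

Lemma hs_norm_gt0 (D : U -> V) k : D (tnth e k) != 0 -> 0 < hs_norm HV e D.
Proof.
move=> Dk; rewrite sqrtr_gt0 (bigD1 k) //= ltr_pwDl ?exprn_gt0 ?hnorm_gt0 //.
by rewrite sumr_ge0 // => i _; rewrite sqr_ge0.
Qed.

Lemma hs_norm_split (f : V) (D : U -> V) : hdot HV f f = 1 ->
  hs_norm HV e D ^+ 2 =
    dualnorm e (\sum_(i < n) hdot HV (D (tnth e i)) f *: dualvec HU e i) ^+ 2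
    + hs_norm HV e (hperp HV f \o D) ^+ 2.
Proof.
move=> f1; rewrite !sqr_hs_norm dualnorm_dualsum // sqr_sqrtr; last first.
  by rewrite sumr_ge0 // => i _; exact: Re_mulcJ_ge0.
rewrite -big_split; apply: eq_bigr => i _ /=.
by rewrite -(sqr_hnorm_addZ_perp f1) ?hdot_hperp // /hperp addrC subrK.
Qed.

Lemma rho_dualsum_bound (f : V) (c : 'I_n -> R[i]) :
  hnorm HV f = 1 ->
  hnorm HW (rho f (\sum_(i < n) c i *: dualvec HU e i))
    <= M * dualnorm e (\sum_(i < n) c i *: dualvec HU e i).
Proof.
move=> f1; set a := \sum_(i < n) _.
have [a0|] := ltrP 0 (dualnorm e a); first by have := rhoM f a0; rewrite f1 mulr1.
move=> a_le0; have a0 : dualnorm e a = 0 by apply/eqP; rewrite eq_le a_le0 dualnorm_ge0.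
have -> : a = 0.
  by rewrite /a big1 // => i _; rewrite (dualnorm_dualsum_eq0 he a0) scale0r.
by rewrite rho0r // hnorm0 mulr_ge0 ?dualnorm_ge0.
Qed.

Lemma trace_rho_bound (r : nat) (D : U -> V) : image_rank_le D r ->
  hnorm HW (trace_rho HU e rho D) <= Num.sqrt r%:R * M * hs_norm HV e D.
Proof.
elim: r D => [|r IH] D Dr.
  by rewrite trace_rho_eq0 ?hnorm0 ?mulr_ge0 ?sqrtr_ge0 // => i; rewrite image_rank_le0.
have [/existsP[k Dk]|/existsPn De0] := boolP [exists k, D (tnth e k) != 0]; last first.
  rewrite trace_rho_eq0 ?hnorm0 ?mulr_ge0 ?sqrtr_ge0 // => i.
  by apply/eqP; rewrite -[_ == _]negbK De0.
set f := (hnorm HV (D (tnth e k)))^-1%:C *: D (tnth e k).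
have f_unit : hnorm HV f = 1 by exact: hnorm_normalize.
have f1 := hnorm_eq1_hdot f_unit.
have Dk_f : D (tnth e k) = (hnorm HV (D (tnth e k)))%:C *: f.
  by rewrite /f scalerA -rmorphM mulfV ?gt_eqF ?hnorm_gt0 // scale1r.
have Dk0 : (hnorm HV (D (tnth e k)))%:C != 0.
  by rewrite eq_complex /= eqxx andbT gt_eqF ?hnorm_gt0.
have DE : D = fun u => hdot HV (D u) f *: f + (hperp HV f \o D) u.
  by apply/funext => u /=; rewrite /hperp addrC subrK.
have Dr' := image_rank_le_perp f1 Dk_f Dk0 Dr.
rewrite {1}DE trace_rho_addZ //.
apply: le_trans (ler_hnormD _ _ _) _.
apply: le_trans (lerD (rho_dualsum_bound _ f_unit) (IH _ Dr')) _.
apply: sqrt_rank_step => //; rewrite ?dualnorm_ge0 ?sqrtr_ge0 //.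
exact: hs_norm_split.
Qed.

End TraceBound.

Unset Implicit Arguments.

Theorem lemma2p2 (R : realType) (U : vectType R[i]) (V W : lmodType R[i])
  (HU : herm_space U) (HV : herm_space V) (HW : herm_space W)
  (e : (\dim (fullv : {vspace U})).-tuple U) (he : orthonormal_tuple HU e)
  (D : {linear U -> V})
  (rho : V -> 'Hom(U, R[i]^o) -> W)
  (rho_linl : forall (a : 'Hom(U, R[i]^o)) (c : R[i]) (v v' : V),
      rho (c *: v + v') a = c *: rho v a + rho v' a)
  (rho_linr : forall (v : V) (c : R[i]) (a a' : 'Hom(U, R[i]^o)),
      rho v (c *: a + a') = c *: rho v a + rho v a') :
  ((hnorm HW (trace_rho HU e rho D))%:E
    <= (Num.sqrt ((rank_lin D)%:R : R))%:E * rho_norm HV HW e rho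
       * (hs_norm HV e D)%:E)%E.
Proof.
have [/existsP[k Dk]|/existsPn De0] := boolP [exists k, D (tnth e k) != 0]; last first.
  have D0 i : D (tnth e i) = 0 by apply/eqP; rewrite -[_ == _]negbK De0.
  rewrite trace_rho_eq0 // /hs_norm big1 => [|i _]; last by rewrite D0 hnorm0 expr0n.
  by rewrite sqrtr0 hnorm0 mule0.
have rank_gt0 : 0 < Num.sqrt (rank_lin D)%:R :> R.
  by rewrite sqrtr_gt0 ltr0n (rank_lin_gt0 Dk).
have hs_gt0 := hs_norm_gt0 HV Dk.
have rho_ge0 := rho_norm_ge0 rho HV HW he k Dk.
case rhoE : (rho_norm HV HW e rho) rho_ge0 => [M| |] // M0.
- rewrite -!EFinM lee_fin.
  apply: (trace_rho_bound he rho_linl rho_linr _ _ (rank_lin_image_le (D := D))).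
    by rewrite -lee_fin.
  exact (rho_norm_bound rho_linl rho_linr rhoE).
- by rewrite mulry gtr0_sg // mul1e mulyr gtr0_sg // mul1e leey.
Qed.
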